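(* Let $0<a\le 1$, let $k\ge 1$, and let $z_1,\dots,z_k\in\mathbb{C}$ be pairwise distinct with $|z_j|\le 1$ and $z_j\neq a$ for $j=1,\dots,k$. Let $r_1,\dots,r_k\ge 0$ be integers (independent of $n$), and for each integer $n\ge 2$ let $s_1(n),\dots,s_k(n)$ be integers with $0\le s_j(n)\le n-1$. Assume: (i) $r_j+s_j(n)\ge 1$ for all $j=1,\dots,k$ and all $n\ge 2$, and $r_j\ge 1$ for some $j\in\{1,\dots,k\}$; (ii) $s_j(n)/n\to 0$ as $n\to\infty$ for each $j\in\{1,\dots,k\}$; (iii) with $X=\{j\in\{1,\dots,k\}: r_j\ge 1\}$ and $P(z)=(z-a)\prod_{j\in X}(z-z_j)^{r_j}$, there exists $\zeta\in\mathbb{C}$ with $|\zeta|\le 1$, $P'(\zeta)=0$ and $|a-\zeta|<1$. For $n\ge 2$ let $n_j=r_jn+s_j(n)$ and $$p_n(z)=(z-a)^n\prod_{j=1}^{k}(z-z_j)^{n_j},\quad z\in\mathbb{C}.$$ Then there exists an integer $n_0$ such that for every $n\ge n_0$ there exists $\zeta\neq a$ with $p_n'(\zeta)=0$ and $|a-\zeta|<1$. *)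

From HB Require Import structures.
From mathcomp Require Import all_boot all_order all_algebra.
From mathcomp Require Import complex.
From mathcomp Require Import reals.
Set Implicit Arguments. Unset Strict Implicit. Unset Printing Implicit Defensive.
Import Order.TTheory GRing.Theory Num.Theory.
Local Open Scope ring_scope.

Definition Ppoly (R : realType) (k : nat) (a : R[i]) (z : 'I_k -> R[i])
  (r : 'I_k -> nat) : {poly R[i]} :=
  ('X - a%:P) * \prod_(j < k | (0 < r j)%N) ('X - (z j)%:P) ^+ r j.

Definition pn (R : realType) (k : nat) (a : R[i]) (z : 'I_k -> R[i])
  (r : 'I_k -> nat) (s : nat -> 'I_k -> nat) (n : nat) : {poly R[i]} :=
  ('X - a%:P) ^+ n * \prod_(j < k) ('X - (z j)%:P) ^+ (r j * n + s n j)%N.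

From HB Require Import structures.
From mathcomp Require Import all_boot all_order all_algebra.
From mathcomp Require Import complex.
From mathcomp Require Import reals.
From mathcomp Require Import ring zify.
Import Order.TTheory GRing.Theory Num.Theory.
Set Implicit Arguments. Unset Strict Implicit. Unset Printing Implicit Defensive.
Local Open Scope ring_scope.

(* Write a polynomial with roots c_x of multiplicities e_x as
   F = \prod_x (X - c_x)^(e_x).  Off its roots, the critical points of F are the
   roots of V_e = \sum_x e_x \prod_(y <> x) (X - c_y), which is linear in e, has
   degree (number of roots) - 1 and leading coefficient \sum_x e_x.  The
   multiplicities of p_n are n e + s(n), where e are those of P, so
   V_(p_n) = n V_P + V_(s(n)).  If zeta is a critical point of P but not a root,
   V_P(zeta) = 0, hence |V_(p_n)(zeta)| = O(\sum_j s_j(n)) = o(n), whereas the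
   leading coefficient of V_(p_n) is at least n.  Factoring V_(p_n) over C, some
   root w of it is within d = 1 - |a - zeta| of zeta for large n, and such a w is
   a critical point of p_n with |a - w| < 1.  If instead zeta is a root of P, it
   is a multiple root z_j, hence a multiple root of every p_n. *)

Lemma root_deriv_XsubC_expM (C : comNzRingType) (c : C) (h : {poly C}) m :
  (1 < m)%N -> root (('X - c%:P) ^+ m * h)^`() c.
Proof.
case: m => [|[|m]] // _; rewrite /root derivM deriv_exp derivXsubC mul1r.
by rewrite hornerD !hornerM hornerMn !hornerE subrr !expr0n /= mul0rn !mul0r addr0.
Qed.

Lemma horner_deriv_XsubC_mul (C : comNzRingType) (c : C) (h : {poly C}) :
  (('X - c%:P) * h)^`().[c] = h.[c].
Proof. by rewrite derivM derivXsubC mul1r !hornerE subrr mul0r addr0. Qed.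

Section NodePoly.

Variables (C : idomainType) (T : eqType) (node : T -> C).

Definition node_poly (e : T -> nat) (l : seq T) : {poly C} :=
  \prod_(x <- l) ('X - (node x)%:P) ^+ e x.

(* logderiv_num e l = \sum_x e x * \prod_(y <> x) ('X - node y), the numerator
   of (node_poly e l)^`() / node_poly e l over \prod_x ('X - node x). *)
Fixpoint logderiv_num (e : T -> C) (l : seq T) : {poly C} :=
  if l is x :: l' then
    (e x)%:P * \prod_(y <- l') ('X - (node y)%:P)
    + ('X - (node x)%:P) * logderiv_num e l'
  else 0.

Lemma root_prod_XsubC_node l w :
  root (\prod_(x <- l) ('X - (node x)%:P)) w = (w \in map node l).
Proof. by rewrite -root_prod_XsubC big_map. Qed.

Lemma deriv_node_poly e l :
  (node_poly e l)^`() * \prod_(x <- l) ('X - (node x)%:P)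
  = node_poly e l * logderiv_num (fun x => (e x)%:R) l.
Proof.
elim: l => [|y l IHl]; first by rewrite /node_poly !big_nil derivC mul0r mulr0.
rewrite /node_poly !big_cons /= -/(node_poly e l).
rewrite derivM deriv_exp derivXsubC mul1r.
set g := 'X - (node y)%:P; set L := \prod_(x <- l) ('X - (node x)%:P).
case: (e y) => [|m].
  rewrite /= mulr0n mul0r add0r expr0 !mul1r polyC0 mul0r add0r.
  by rewrite mulrCA IHl; ring.
rewrite /= polyC_natr exprS.
have -> : (g ^+ m *+ m.+1 * node_poly e l + g * g ^+ m * (node_poly e l)^`()) * (g * L)
   = g * g ^+ m * (node_poly e l * m.+1%:R * L) + g * g ^+ m * g * ((node_poly e l)^`() * L)
  by ring.
by rewrite IHl; ring.
Qed.

Lemma eq_logderiv_num e1 e2 l : e1 =1 e2 -> logderiv_num e1 l = logderiv_num e2 l.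
Proof. by move=> e12; elim: l => //= y l ->; rewrite e12. Qed.

Lemma logderiv_num_lin e1 e2 c l :
  logderiv_num (fun x => e1 x * c + e2 x) l
  = logderiv_num e1 l * c%:P + logderiv_num e2 l.
Proof.
elim: l => [|y l IHl] /=; first by rewrite mul0r addr0.
by rewrite IHl polyCD polyCM; ring.
Qed.

Lemma logderiv_num_node_neq0 e l x :
  uniq (map node l) -> x \in l -> e x != 0 -> (logderiv_num e l).[node x] != 0.
Proof.
elim: l => [|y l IHl] //= /andP[yNl l_uniq].
rewrite in_cons hornerD !hornerM !hornerE => /orP[/eqP -> | xl] ex.
  rewrite subrr mul0r addr0 mulf_neq0 //.
  by move: yNl; rewrite -root_prod_XsubC_node /root.
have /rootP -> : root (\prod_(x <- l) ('X - (node x)%:P)) (node x).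
  by rewrite root_prod_XsubC_node map_f.
rewrite mulr0 add0r mulf_neq0 ?IHl // subr_eq0.
by apply: contraNneq yNl => <-; rewrite map_f.
Qed.

Lemma size_logderiv_num_le e l : (size (logderiv_num e l) <= size l)%N.
Proof.
elim: l => [|y l IHl] /=; first by rewrite size_poly0.
apply: leq_trans (size_polyD _ _) _; rewrite geq_max; apply/andP; split.
  apply: leq_trans (size_polyMleq _ _) _.
  by rewrite size_prod_XsubC; have := size_polyC_leq1 (e y); lia.
by apply: leq_trans (size_polyMleq _ _) _; rewrite size_XsubC; lia.
Qed.

Lemma coef_logderiv_num e l :
  (logderiv_num e l)`_(size l).-1 = \sum_(x <- l) e x.
Proof.
elim: l => [|y l IHl] /=; first by rewrite big_nil coef0.
rewrite big_cons coefD coefCM mulrBl coefB coefXM coefCM.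
have /monicP : \prod_(x <- l) ('X - (node x)%:P) \is monic by apply: monic_prod_XsubC.
rewrite lead_coefE size_prod_XsubC => ->.
rewrite (nth_default _ (size_logderiv_num_le e l)) mulr0 subr0 mulr1.
by case: l IHl => [|w l] /= IHl; rewrite ?big_nil ?IHl.
Qed.

Lemma size_logderiv_num e l :
  \sum_(x <- l) e x != 0 -> size (logderiv_num e l) = size l.
Proof.
move=> sum_neq0; apply/eqP; rewrite eqn_leq size_logderiv_num_le /=.
case: l sum_neq0 => [|y l]; first by rewrite big_nil eqxx.
rewrite -coef_logderiv_num => coef_neq0; rewrite ltnNge; apply: contra coef_neq0.
by move=> /(nth_default 0) ->.
Qed.

Lemma lead_coef_logderiv_num e l :
  \sum_(x <- l) e x != 0 -> lead_coef (logderiv_num e l) = \sum_(x <- l) e x.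
Proof. by move=> sum_neq0; rewrite lead_coefE size_logderiv_num // coef_logderiv_num. Qed.

Lemma node_poly_rem e l x :
  x \in l -> node_poly e l = ('X - (node x)%:P) ^+ e x * node_poly e (rem x l).
Proof. by move=> xl; rewrite /node_poly (big_rem x). Qed.

Lemma root_node_poly e l w :
  root (node_poly e l) w -> exists2 x, x \in l & w = node x /\ (0 < e x)%N.
Proof.
rewrite /root /node_poly horner_prod prodf_seq_eq0 => /hasP[x xl].
by rewrite !hornerE expf_eq0 subr_eq0 => /andP[ex /eqP wx]; exists x.
Qed.

Lemma node_poly_nroot e l w : w \notin map node l -> ~~ root (node_poly e l) w.
Proof. by apply: contra => /root_node_poly[x xl [-> _]]; rewrite map_f. Qed.

Lemma root_deriv_node_poly_at_node e l x :
  uniq (map node l) -> x \in l -> (0 < e x)%N ->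
  root (node_poly e l)^`() (node x) = (1 < e x)%N.
Proof.
move=> l_uniq xl ex_gt0; rewrite (node_poly_rem e xl).
case: (ltnP 1 (e x)) => [ex_gt1 | ex_le1]; first exact: root_deriv_XsubC_expM.
have -> : e x = 1%N by lia.
rewrite expr1 /root horner_deriv_XsubC_mul; apply/negbTE/(node_poly_nroot e).
have := perm_uniq (perm_map node (perm_to_rem xl)).
by rewrite l_uniq /= => /esym/andP[].
Qed.

Lemma root_logderiv_num e l w :
  ~~ root (node_poly e l) w -> root (node_poly e l)^`() w ->
  root (logderiv_num (fun x => (e x)%:R) l) w.
Proof.
move=> Fw_neq0 /rootP F'w; have := congr1 (horner^~ w) (deriv_node_poly e l).
by rewrite !hornerM F'w mul0r => /esym/eqP; rewrite mulf_eq0 [_ == 0](negbTE Fw_neq0).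
Qed.

Lemma root_deriv_node_poly e l w :
  w \notin map node l -> root (logderiv_num (fun x => (e x)%:R) l) w ->
  root (node_poly e l)^`() w.
Proof.
move=> wNl /rootP Vw; have := congr1 (horner^~ w) (deriv_node_poly e l).
rewrite !hornerM Vw mulr0 => /eqP; rewrite mulf_eq0 => /orP[// | Lw].
by move: wNl; rewrite -root_prod_XsubC_node /root Lw.
Qed.

End NodePoly.

Lemma norm_logderiv_num_le (C : numDomainType) (T : eqType) (node : T -> C) e l w :
  `|(logderiv_num node e l).[w]|
  <= (\sum_(x <- l) `|e x|) * \prod_(x <- l) (`|w - node x| + 1).
Proof.
elim: l => [|y l IHl] /=; first by rewrite horner0 normr0 big_nil mul0r.
rewrite !big_cons hornerD !hornerM !hornerE.
set S := \sum_(x <- l) `|e x| in IHl *.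
set B := \prod_(x <- l) (`|w - node x| + 1) in IHl *.
have B_ge0 : 0 <= B by apply: prodr_ge0 => x _; rewrite addr_ge0.
have S_ge0 : 0 <= S by apply: sumr_ge0.
have L_le : `|(\prod_(x <- l) ('X - (node x)%:P)).[w]| <= B.
  rewrite horner_prod normr_prod; apply: ler_prod => x _.
  by rewrite normr_ge0 !hornerE lerDl.
apply: le_trans (ler_normD _ _) _; rewrite !normrM.
apply: le_trans (lerD (ler_wpM2l (normr_ge0 _) L_le) (ler_wpM2l (normr_ge0 _) IHl)) _.
rewrite -[X in _ <= X]/((`|e y| + S) * (`|w - node y| + 1) * B).
have -> : (`|e y| + S) * (`|w - node y| + 1) * B
  = `|e y| * B + `|w - node y| * (S * B) + (`|e y| * `|w - node y| * B + S * B).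
  by ring.
by rewrite lerDl addr_ge0 // !mulr_ge0.
Qed.

Lemma exists_root_near (C : numClosedFieldType) (p : {poly C}) x d :
  p != 0 -> 0 <= d -> `|p.[x]| < `|lead_coef p| * d ^+ (size p).-1 ->
  exists2 w, root p w & `|x - w| < d.
Proof.
move=> p_neq0 d_ge0 px_lt; have [rs p_eq] := closed_field_poly_normal p.
have lc_neq0 : lead_coef p != 0 by rewrite lead_coef_eq0.
have [/hasP[w wrs xw_lt] | /hasPn far] := boolP (has (fun w => `|x - w| < d) rs).
  by exists w => //; rewrite p_eq rootZ // root_prod_XsubC.
suff : `|lead_coef p| * d ^+ (size p).-1 <= `|p.[x]|.
  by move/(lt_le_trans px_lt); rewrite ltxx.
have -> : (size p).-1 = size rs by rewrite {1}p_eq size_scale // size_prod_XsubC.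
rewrite {2}p_eq hornerZ normrM ler_pM2l ?normr_gt0 // horner_prod normr_prod.
rewrite -[d ^+ _]mulr1 -iter_mulr -(count_predT rs) -big_const_seq.
rewrite !big_seq; apply: ler_prod => w wrs; rewrite d_ge0 !hornerE /=.
by rewrite real_leNgt ?far ?normr_real ?ger0_real.
Qed.

Lemma critical_point_near (C : numClosedFieldType) (T : eqType) (node : T -> C)
    (e1 es : T -> nat) n l w d :
  uniq (map node l) ->
  (forall x, x \in l -> 0 < e1 x * n + es x)%N ->
  (0 < \sum_(x <- l) e1 x)%N ->
  root (logderiv_num node (fun x => (e1 x)%:R) l) w ->
  0 <= d ->
  (\sum_(x <- l) es x)%:R * \prod_(x <- l) (`|w - node x| + 1)
    < n%:R * d ^+ (size l).-1 ->
  exists w', [/\ root (node_poly node (fun x => e1 x * n + es x)%N l)^`() w',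
                 w' \notin map node l & `|w - w'| < d].
Proof.
move=> l_uniq en_gt0 e1_gt0 V1w d_ge0 es_small.
set en := fun x => (e1 x * n + es x)%N.
pose V := logderiv_num node (fun x => (en x)%:R) l.
have Vw : V.[w] = (logderiv_num node (fun x => (es x)%:R) l).[w].
  have -> : V = logderiv_num node (fun x => (e1 x)%:R * n%:R + (es x)%:R) l.
    by apply: eq_logderiv_num => x; rewrite /en natrD natrM.
  by rewrite logderiv_num_lin hornerD hornerM (rootP V1w) mul0r add0r.
have n_gt0 : (0 < n)%N.
  rewrite lt0n; apply: contraTneq es_small => ->; rewrite mul0r le_gtF //.
  by rewrite mulr_ge0 ?prodr_ge0 // => x _; rewrite addr_ge0.
have n_le_sum : (n <= \sum_(x <- l) en x)%N.
  rewrite /en big_split -big_distrl /= mulnC.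
  exact: leq_trans (leq_pmulr n e1_gt0) (leq_addr _ _).
have sum_neq0 : \sum_(x <- l) ((en x)%:R : C) != 0.
  by rewrite -natr_sum pnatr_eq0 -lt0n; apply: leq_trans n_le_sum.
have V_neq0 : V != 0 by rewrite -lead_coef_eq0 lead_coef_logderiv_num.
have [w' Vw' ww'_lt] : exists2 w', root V w' & `|w - w'| < d.
  apply: exists_root_near => //.
  rewrite lead_coef_logderiv_num // size_logderiv_num // Vw -natr_sum normr_nat.
  apply: le_lt_trans (norm_logderiv_num_le _ _ _ _) _.
  have -> : \sum_(x <- l) `|(es x)%:R : C| = (\sum_(x <- l) es x)%:R.
    by rewrite natr_sum; apply: eq_bigr => x _; rewrite normr_nat.
  apply: lt_le_trans es_small _.
  by rewrite ler_wpM2r ?exprn_ge0 // ler_nat.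
have w'Nl : w' \notin map node l.
  apply/mapP => -[x xl w'x]; move: Vw'; rewrite w'x; apply/negP.
  by apply: logderiv_num_node_neq0 => //; rewrite pnatr_eq0 -lt0n en_gt0.
by exists w'; split => //; apply: root_deriv_node_poly.
Qed.

Lemma sum_sublinear_lt (F : realFieldType) (I : finType) (f : nat -> I -> nat) :
  (forall i (eps : F), 0 < eps ->
     exists N, forall n, (N <= n)%N -> `|(f n i)%:R / n%:R| < eps) ->
  forall eps : F, 0 < eps ->
    exists N, forall n, (N <= n)%N -> (\sum_i f n i)%:R < eps * n%:R.
Proof.
move=> f_sublin eps eps_gt0; pose eps' := eps / #|I|.+1%:R.
have eps'_gt0 : 0 < eps' by rewrite divr_gt0 ?ltr0n.
have [N N_spec] := fin_all_exists (fun i => f_sublin i eps' eps'_gt0).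
exists (\max_i N i).+1 => n max_lt_n.
have n_gt0 : (0 < n)%N by apply: leq_trans max_lt_n.
have f_lt i : (f n i)%:R < eps' * n%:R.
  have /N_spec : (N i <= n)%N by apply: leq_trans (leq_bigmax i) (ltnW max_lt_n).
  by move=> /ltr_normlW; rewrite ltr_pdivrMr ?ltr0n.
rewrite natr_sum; apply: le_lt_trans (ler_sum _ (fun i _ => ltW (f_lt i))) _.
have -> : eps * n%:R = #|I|.+1%:R * (eps' * n%:R).
  by rewrite /eps'; field; rewrite addrC natr1 pnatr_eq0.
by rewrite sumr_const -[_ *+ #|_|]mulr_natl ltr_pM2r ?ltr_nat // mulr_gt0 ?ltr0n.
Qed.

Lemma sum_sublinear_lt_complex (R : rcfType) (I : finType) (f : nat -> I -> nat) (b c : R[i]) :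
  (forall i (eps : R), 0 < eps ->
     exists N, forall n, (N <= n)%N -> `|(f n i)%:R / n%:R| < eps) ->
  0 < b -> 0 < c ->
  exists N, forall n, (N <= n)%N -> (\sum_i f n i)%:R * b < n%:R * c.
Proof.
move=> f_sublin b_gt0 c_gt0.
have [eps eps_def] : exists eps : R, c / b = (eps%:C)%C.
  by apply/complex_realP; rewrite ger0_real // ltW // divr_gt0.
have eps_gt0 : 0 < eps by rewrite -ltcR -eps_def divr_gt0.
have [N N_spec] := sum_sublinear_lt f_sublin eps_gt0.
exists N => n Nn; rewrite [n%:R * _]mulrC -ltr_pdivlMr // mulrAC.
by have := N_spec n Nn; rewrite -ltcR rmorphM /= !rmorph_nat -eps_def.
Qed.

(* The roots of p_n are indexed by option 'I_k, None standing for a. *)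
Section Theorem3Nodes.

Variables (R : realType) (k : nat) (A : R[i]) (z : 'I_k -> R[i]).

Definition node_at (o : option 'I_k) : R[i] := if o is Some j then z j else A.

Definition nodes : seq (option 'I_k) := None :: map Some (index_enum 'I_k).

Definition base_mult (r : 'I_k -> nat) (o : option 'I_k) : nat :=
  if o is Some j then r j else 1.

Definition extra_mult (t : 'I_k -> nat) (o : option 'I_k) : nat :=
  if o is Some j then t j else 0.

Lemma uniq_nodes : injective z -> (forall j, z j != A) -> uniq (map node_at nodes).
Proof.
move=> z_inj z_neqA; have node_inj : injective node_at.
  move=> [i|] [j|] //= => [/z_inj -> // | zi_eq | zj_eq].
    by move: (z_neqA i); rewrite zi_eq eqxx.
  by move: (z_neqA j); rewrite zj_eq eqxx.
rewrite (map_inj_uniq node_inj) /= (map_inj_uniq Some_inj) index_enum_uniq andbT.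
by apply/mapP => -[].
Qed.

Lemma Ppoly_node_poly r : Ppoly A z r = node_poly node_at (base_mult r) nodes.
Proof.
rewrite /Ppoly /node_poly big_cons big_map expr1 big_mkcond; congr (_ * _).
by apply: eq_bigr => j _ /=; case: ifP => // /negbT; rewrite -leqNgt leqn0 => /eqP ->.
Qed.

Lemma pn_node_poly r s n :
  pn A z r s n
  = node_poly node_at (fun o => base_mult r o * n + extra_mult (s n) o)%N nodes.
Proof. by rewrite /pn /node_poly big_cons big_map /= mul1n addn0. Qed.

Lemma sum_extra_mult t : \sum_(o <- nodes) extra_mult t o = \sum_j t j.
Proof. by rewrite big_cons big_map. Qed.

End Theorem3Nodes.

Theorem theorem3 (R : realType) (a : R) (k : nat)
  (z : 'I_k -> R[i]) (r : 'I_k -> nat) (s : nat -> 'I_k -> nat) :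
  0 < a -> a <= 1 ->
  (1 <= k)%N ->
  injective z ->
  (forall j, `|z j| <= 1) ->
  (forall j, z j != (a%:C)%C) ->
  (forall n, (2 <= n)%N -> forall j, (s n j <= n - 1)%N) ->
  (* (i) *)
  (forall n, (2 <= n)%N -> forall j, (1 <= r j + s n j)%N) ->
  (exists j, (1 <= r j)%N) ->
  (* (ii) s_j(n)/n -> 0 *)
  (forall j (eps : R), 0 < eps ->
     exists N : nat, forall n : nat, (N <= n)%N ->
       `|(s n j)%:R / n%:R| < eps) ->
  (* (iii) *)
  (exists zeta : R[i], `|zeta| <= 1 /\
     root (Ppoly (a%:C)%C z r)^`() zeta /\ `|(a%:C)%C - zeta| < 1) ->
  exists n0 : nat, forall n : nat, (n0 <= n)%N -> (2 <= n)%N ->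
    exists zeta : R[i], zeta != (a%:C)%C /\
      root (pn (a%:C)%C z r s n)^`() zeta /\ `|(a%:C)%C - zeta| < 1.
Proof.
move=> _ _ _ z_inj _ z_neqa _ rs_ge1 _ s_sublin [zeta [_ [P'zeta a_zeta_lt1]]].
set A := (a%:C)%C in z_neqa P'zeta a_zeta_lt1 *.
have l_uniq := uniq_nodes z_inj z_neqa.
rewrite Ppoly_node_poly in P'zeta.
have [Pzeta | NPzeta] := boolP (root (node_poly (node_at A z) (base_mult r) (nodes k)) zeta).
  have [[j|] jl [zeta_eq rj_gt0]] := root_node_poly Pzeta; subst zeta; last first.
    by move: P'zeta; rewrite root_deriv_node_poly_at_node ?mem_head.
  exists 0%N => n _ n_ge2; exists (z j); split=> //; split=> //.
  rewrite pn_node_poly -[z j]/(node_at A z (Some j)) root_deriv_node_poly_at_node //=;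
    by move: rj_gt0 => /=; nia.
set d := 1 - `|A - zeta|; have d_gt0 : 0 < d by rewrite subr_gt0.
have B_gt0 : 0 < \prod_(o <- nodes k) (`|zeta - node_at A z o| + 1).
  by apply: prodr_gt0 => o _; rewrite ltr_wpDl.
have [N N_spec] :=
  sum_sublinear_lt_complex s_sublin B_gt0 (exprn_gt0 (size (nodes k)).-1 d_gt0).
exists N => n Nn n_ge2.
have mult_gt0 o : o \in nodes k -> (0 < base_mult r o * n + extra_mult (s n) o)%N.
  by case: o => [j|] _ /=; [have := rs_ge1 n n_ge2 j; nia | lia].
have [||w [p'w wNl zeta_w_lt]] := critical_point_near l_uniq mult_gt0 _
  (root_logderiv_num NPzeta P'zeta) (ltW d_gt0) _.
- by rewrite big_cons.
- by rewrite sum_extra_mult N_spec.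
exists w; split; first by apply: contraNneq wNl => ->; exact: (map_f _ (mem_head None _)).
rewrite pn_node_poly; split=> //; apply: le_lt_trans (ler_distD zeta A w) _.
by rewrite -(subrK `|A - zeta| 1) -/d [d + _]addrC ltrD2l.
Qed.
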